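(* Let $X$ be a CRSM on $E$ with extremal coefficient functional $\theta$. Then for all $K_1,K_2\in\mathcal K$ and $\varepsilon>0$, $$\mathbb P\{X(K_1)-X(K_2)\le\varepsilon\}\ge\exp\Big\{-\frac1\varepsilon\big(\theta(K_1\cup K_2)-\theta(K_2)\big)\Big\},$$ and consequently $$\mathbb P\{|X(K_1)-X(K_2)|>\varepsilon\}\le\frac1\varepsilon\big(2\theta(K_1\cup K_2)-\theta(K_1)-\theta(K_2)\big).$$
   Context: $E$ is a locally compact Hausdorff second countable space; $\mathcal K$ its compact subsets. A sup-measure on $E$ is a Choquet capacity $\varphi$ (non-decreasing, $\varphi(\emptyset)=0$, $\varphi(A_n)\uparrow\varphi(A)$ if $A_n\uparrow A$, $\varphi(K_n)\downarrow\varphi(K)$ for compact $K_n\downarrow K$), finite on compacts, with $\varphi(\bigcup_j G_j)=\sup_j\varphi(G_j)$ for all families of open sets; a random sup-measure is a random element of the space of sup-measures (Borel $\sigma$-algebra of the sup-vague topology). $\mathrm{USC}$: bounded non-negative upper semicontinuous functions with relatively compact support. Extremal integral $\int^e f\,d\varphi=\sup\{\varphi(K)\inf_{x\in K}f(x):K\in\mathcal K\}$. Unit Fréchet with scale $a\ge0$: distribution function $\exp(-a/t)$, $t>0$. $X$ is max-stable if $\bigvee_iu_iX(K_i)$ is unit Fréchet for all $K_i\in\mathcal K$, $u_i\ge0$; tail dependence functional $\ell(f)$ = scale of $\int^e f\,dX$; extremal coefficient functional $\theta(K)=\ell(\mathbf 1_K)$. $X$ is a CRSM if it is max-stable and $\ell(f+g)=\ell(f)+\ell(g)$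 for all $f,g\in\mathrm{USC}$ with $(f(x)-f(y))(g(x)-g(y))\ge0$ for all $x,y$. *)

From HB Require Import structures.
From mathcomp Require Import all_boot all_order all_algebra.
From mathcomp Require Import all_classical all_reals all_analysis.
Set Implicit Arguments. Unset Strict Implicit. Unset Printing Implicit Defensive.
Import Order.TTheory GRing.Theory Num.Theory.
Import numFieldNormedType.Exports.
Local Open Scope classical_set_scope.
Local Open Scope ring_scope.

Definition LCHS (E : topologicalType) : Prop :=
  [/\ hausdorff_space E, locally_compact [set: E] & @second_countable E].

Definition sup_measure (R : realType) (E : topologicalType)
    (phi : set E -> \bar R) : Prop :=
  phi set0 = 0%E /\
  [/\ (forall A B : set E, A `<=` B -> (phi A <= phi B)%E),
      (forall A : nat -> set E, (forall n, A n `<=` A n.+1) ->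
          phi \o A @ \oo --> phi (\bigcup_n A n)),
      (forall K : nat -> set E, (forall n, compact (K n)) ->
          (forall n, K n.+1 `<=` K n) ->
          phi \o K @ \oo --> phi (\bigcap_n K n)),
      (forall K : set E, compact K -> phi K \is a fin_num) &
      (forall F : set (set E), F !=set0 -> (forall G, F G -> open G) ->
          phi (\bigcup_(G in F) G) = ereal_sup (phi @` F))].

Definition sup_vague_subbase (R : realType) (E : topologicalType)
    (U : set (set E -> \bar R)) : Prop :=
  (exists K (x : R), compact K /\ U = [set phi | (phi K < x%:E)%E]) \/
  (exists G (x : R), open G /\ U = [set phi | (x%:E < phi G)%E]).

(* A random sup-measure: each realisation is a sup-measure, and X is
   measurable for the Borel sigma-algebra of the sup-vague topology
   (generated by the subbase above, since that topology is second countable). *)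
Definition random_sup_measure (R : realType) (E : topologicalType)
    (d : measure_display) (Omega : measurableType d)
    (X : Omega -> set E -> \bar R) : Prop :=
  (forall w, sup_measure (X w)) /\
  (forall U, sup_vague_subbase U -> measurable (X @^-1` U)).

Definition frechet (R : realType) (d : measure_display) (Omega : measurableType d)
    (P : probability Omega R) (Y : Omega -> \bar R) (a : R) : Prop :=
  0 <= a /\ forall t : R, 0 < t ->
    measurable [set w | (Y w <= t%:E)%E] /\
    P [set w | (Y w <= t%:E)%E] = (expR (- (a / t)))%:E.

Definition max_stable (R : realType) (E : topologicalType)
    (d : measure_display) (Omega : measurableType d)
    (P : probability Omega R) (X : Omega -> set E -> \bar R) : Prop :=
  forall (n : nat) (K : 'I_n -> set E) (u : 'I_n -> R),
    (forall i, compact (K i)) -> (forall i, 0 <= u i) ->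
    exists a : R, frechet P
      (fun w => \big[Order.max/0%E]_(i < n) ((u i)%:E * X w (K i))%E) a.

Definition USC (R : realType) (E : topologicalType) (f : E -> R) : Prop :=
  [/\ (forall x, 0 <= f x),
      (exists M : R, forall x, f x <= M),
      (forall t : R, open [set x | f x < t]) &
      compact (closure [set x | f x != 0])].

Definition ext_int (R : realType) (E : topologicalType) (f : E -> R)
    (phi : set E -> \bar R) : \bar R :=
  ereal_sup [set (phi K * (inf (f @` K))%:E)%E | K in [set K : set E | compact K]].

Definition ell (R : realType) (E : topologicalType)
    (d : measure_display) (Omega : measurableType d)
    (P : probability Omega R) (X : Omega -> set E -> \bar R) (f : E -> R) : R :=
  xget 0 [set a | frechet P (fun w => ext_int f (X w)) a].

Definition theta (R : realType) (E : topologicalType)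
    (d : measure_display) (Omega : measurableType d)
    (P : probability Omega R) (X : Omega -> set E -> \bar R) (K : set E) : R :=
  ell P X \1_K.

Definition comonotone (R : realType) (E : Type) (f g : E -> R) : Prop :=
  forall x y, 0 <= (f x - f y) * (g x - g y).

Definition CRSM (R : realType) (E : topologicalType)
    (d : measure_display) (Omega : measurableType d)
    (P : probability Omega R) (X : Omega -> set E -> \bar R) : Prop :=
  [/\ random_sup_measure X, max_stable P X &
      forall f g : E -> R, USC f -> USC g -> comonotone f g ->
        ell P X (f \+ g) = ell P X f + ell P X g].

From HB Require Import structures.
From mathcomp Require Import all_boot all_order all_algebra.
From mathcomp Require Import all_classical all_reals all_analysis.
From mathcomp Require Import measurable_realfun ring lra.
Set Implicit Arguments.
Unset Strict Implicit.
Unset Printing Implicit Defensive.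

Import Order.TTheory GRing.Theory Num.Theory.
Import numFieldNormedType.Exports.
Local Open Scope classical_set_scope.
Local Open Scope ring_scope.

(* For K included in L, comonotone additivity of the tail dependence functional
   applied to x^-1 1_L + (y^-1 - x^-1) 1_K, whose extremal integral is
   max (X L / x, X K / y), gives the joint law
     P{X L <= x, X K <= y} = exp (- (theta L - theta K) / x - theta K / y)
   for 0 < y <= x.  Cutting {X L - X K <= eps} along X K <= (n+1) eps and
   adding up the rectangle increments of this law between consecutive cuts
   bounds its probability below by
     exp (- (theta L - theta K) / eps) * exp (- theta K / ((n+1) eps))
   for every n, and letting n grow leaves the first factor.  Monotonicity of X in the set gives
   the first inequality with L = K1 `|` K2; the second follows from the union
   bound over the two one-sided events and exp (- u) >= 1 - u. *)

Lemma le_of_le_addn (R : archiRealFieldType) (a b C : R) :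
  0 <= C -> (forall n : nat, a <= b + C / n.+1%:R) -> a <= b.
Proof.
move=> C0 abC; apply/ler_addgt0Pr => e e0.
have := archi_boundP (divr_ge0 C0 (ltW e0)).
set n := Num.Def.archi_bound _; rewrite ltr_pdivrMr // => Cn.
apply: (le_trans (abC n)); rewrite lerD2l ler_pdivrMr ?ltr0Sn //.
by apply: ltW (lt_le_trans Cn _); rewrite mulrC ler_wpM2l ?ler_nat ?ltW.
Qed.

Lemma expRN_div_le (R : realType) (a u v : R) :
  0 <= a -> 0 < u -> u <= v -> expR (- (a / u)) <= expR (- (a / v)).
Proof.
move=> a0 u0 uv; rewrite ler_expR lerN2 ler_wpM2l // lef_pV2 ?posrE //.
exact: lt_le_trans uv.
Qed.

Lemma measurable_fun_ereal_lt (R : realType) (d : measure_display)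
    (Omega : measurableType d) (Y : Omega -> \bar R) :
  (forall x : R, measurable [set w | (Y w < x%:E)%E]) -> measurable_fun setT Y.
Proof.
move=> mY; apply: (@measurability _ _ _ _ setT Y (@ErealGenInftyO.G R)).
  exact: ErealGenInftyO.measurableE.
move=> _ [_ [x ->] <-]; rewrite setTI.
suff -> : Y @^-1` `]-oo, x%:E[ = [set w | (Y w < x%:E)%E] by [].
by apply/seteqP; split => w /=; rewrite in_itv.
Qed.

Section sup_measure.
Variables (R : realType) (E : topologicalType) (phi : set E -> \bar R).
Hypothesis phi_sup : sup_measure phi.

Lemma sup_measure0 : phi set0 = 0%E.
Proof. by case: phi_sup. Qed.

Lemma le_sup_measure A B : A `<=` B -> (phi A <= phi B)%E.
Proof. by case: phi_sup => _ [mono _ _ _ _]; apply: mono. Qed.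

Lemma sup_measure_ge0 A : (0 <= phi A)%E.
Proof. by rewrite -sup_measure0; apply: le_sup_measure. Qed.

Lemma sup_measure_fineK K : compact K -> (fine (phi K))%:E = phi K.
Proof. by case: phi_sup => _ [_ _ _ finK _] /finK /fineK. Qed.

Lemma ext_int_ge (f : E -> R) K c : compact K -> 0 <= c ->
  (forall z, K z -> c <= f z) -> (c%:E * phi K <= ext_int f phi)%E.
Proof.
move=> cK c0 cf; apply: le_trans (ereal_sup_ubound _); last by exists K.
have [->|/set0P[z Kz]] := eqVneq K set0.
  by rewrite sup_measure0 mule0 mul0e.
rewrite -(sup_measure_fineK cK) -!EFinM lee_fin mulrC.
rewrite ler_wpM2l ?fine_ge0 ?sup_measure_ge0 //.
by apply: lb_le_inf; [exists (f z), z | move=> _ [y Ky <-]; apply: cf].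
Qed.

Lemma ext_int_term_le (f : E -> R) K z c : (forall x, 0 <= f x) ->
  compact K -> K z -> f z <= c -> (phi K * (inf (f @` K))%:E <= c%:E * phi K)%E.
Proof.
move=> f0 cK Kz fzc; rewrite -(sup_measure_fineK cK) -!EFinM lee_fin mulrC.
rewrite ler_wpM2r ?fine_ge0 ?sup_measure_ge0 //; apply: le_trans fzc.
by apply: ge_inf; [exists 0 => _ [x _ <-] | exists z].
Qed.

Lemma ext_int_step2 (f : E -> R) K L a a' :
  compact K -> compact L -> K `<=` L -> 0 <= a' -> a' <= a ->
  (forall z, K z -> f z = a) -> (forall z, L z -> ~ K z -> f z = a') ->
  (forall z, ~ L z -> f z = 0) ->
  ext_int f phi = (maxe (a'%:E * phi L) (a%:E * phi K))%E.
Proof.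
move=> cK cL KL a'0 a'a fK fL fLc.
have f0 z : 0 <= f z.
  have [/fK->|nKz] := pselect (K z); first exact: le_trans a'a.
  by have [/fL->|/fLc->] := pselect (L z).
apply/eqP; rewrite eq_le ge_max !ext_int_ge ?(le_trans a'0 a'a) //; last first.
  by move=> z Lz; have [/fK->|/(fL _ Lz)->] := pselect (K z).
  by move=> z /fK->.
rewrite !andbT; apply: ge_ereal_sup => _ [K' cK' <-].
have [K'L|/existsNP[z /not_implyP[K'z nLz]]] := pselect (K' `<=` L); last first.
  have fz : f z <= 0 by rewrite fLc.
  apply: le_trans (ext_int_term_le f0 cK' K'z fz) _.
  by rewrite mul0e le_max mule_ge0 ?sup_measure_ge0.
have [K'K|/existsNP[z /not_implyP[K'z nKz]]] := pselect (K' `<=` K); last first.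
  have fz : f z <= a' by rewrite fL //; apply: K'L.
  apply: le_trans (ext_int_term_le f0 cK' K'z fz) _.
  by rewrite le_max lee_wpmul2l ?le_sup_measure ?lee_fin.
have [->|/set0P[z K'z]] := eqVneq K' set0.
  by rewrite sup_measure0 mul0e le_max mule_ge0 ?sup_measure_ge0 ?lee_fin.
have fz : f z <= a by rewrite fK //; apply: K'K.
apply: le_trans (ext_int_term_le f0 cK' K'z fz) _.
by rewrite le_max [X in _ || X]lee_wpmul2l ?le_sup_measure ?lee_fin ?orbT
  ?(le_trans a'0 a'a).
Qed.

End sup_measure.

Section frechet.
Variables (R : realType) (d : measure_display) (Omega : measurableType d)
  (P : probability Omega R).

Lemma frechet_unique (Y : Omega -> \bar R) a b :
  frechet P Y a -> frechet P Y b -> a = b.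
Proof.
move=> [_ /(_ 1 ltr01)[_ ea]] [_ /(_ 1 ltr01)[_ eb]].
move: ea; rewrite eb !divr1 => eab.
by apply: oppr_inj; apply: expR_inj; apply: EFin_inj.
Qed.

Lemma frechet_scale (Y : Omega -> \bar R) a c :
  frechet P Y a -> 0 <= c -> frechet P (fun w => (c%:E * Y w)%E) (c * a).
Proof.
move=> [a0 cdfY] c0; split => [|t t0]; first exact: mulr_ge0.
have [->|c_neq0] := eqVneq c 0.
  suff -> : [set w | (0%:E * Y w <= t%:E)%E] = setT.
    by split; rewrite // probability_setT !mul0r oppr0 expR0.
  by apply/seteqP; split => // w _ /=; rewrite mul0e lee_fin ltW.
have cpos : 0 < c by rewrite lt_def c_neq0.
have tE : t%:E = (c%:E * (t / c)%:E)%E by rewrite -EFinM mulrC divfK.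
have -> : [set w | (c%:E * Y w <= t%:E)%E] = [set w | (Y w <= (t / c)%:E)%E].
  by apply/seteqP; split => w /=; rewrite tE lee_pmul2l ?lte_fin.
have [mY ->] := cdfY _ (divr_gt0 t0 cpos); split => //.
suff -> : a / (t / c) = c * a / t by [].
by rewrite invf_div mulrA (mulrC a).
Qed.

Lemma ell_frechet (E : topologicalType) (X : Omega -> set E -> \bar R)
    (f : E -> R) a :
  frechet P (fun w => ext_int f (X w)) a -> ell P X f = a.
Proof.
by move=> fa; apply: frechet_unique (xgetPex 0 (ex_intro _ a fa)) fa.
Qed.

End frechet.

Lemma USC_scaled_indicator (R : realType) (E : topologicalType) (A : set E)
    (c : R) :
  hausdorff_space E -> compact A -> 0 <= c -> USC (fun z => c * \1_A z).
Proof.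
move=> hausE cA c0; have clA : closed A := compact_closed hausE cA.
have vals z : (c * \1_A z = 0 /\ ~ A z) \/ (c * \1_A z = c /\ A z).
  rewrite indicE; have [/set_mem Az|/negP nAz] := boolP (z \in A).
    by right; rewrite mulr1.
  by left; rewrite mulr0; split => // /mem_set.
split.
- by move=> z; have [[-> _]|[-> _]] := vals z.
- by exists c => z; have [[-> _]|[-> _]] := vals z.
- move=> t; have [t0|t0] := lerP t 0.
    suff -> : [set x | c * \1_A x < t] = set0 by exact: open0.
    by apply/seteqP; split => // z /=; have [[-> _]|[-> _]] := vals z => h; lra.
  have [ct|tc] := ltrP c t.
    suff -> : [set x | c * \1_A x < t] = setT by exact: openT.
    by apply/seteqP; split => // z _ /=; have [[-> _]|[-> _]] := vals z.
  suff -> : [set x | c * \1_A x < t] = ~` A by exact: closed_openC.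
  apply/seteqP; split => z /=; have [[-> nA]|[-> Az]] := vals z => //.
  by move=> h; lra.
- apply: (subclosed_compact _ cA); first exact: closed_closure.
  rewrite [X in _ `<=` X](closure_id A).1 //; apply: closureS => z /=.
  by have [[-> _]|[_ Az]] := vals z => //; rewrite eqxx.
Qed.

Lemma comonotone_indicators (R : realType) (E : Type) (K L : set E)
    (c1 c2 : R) :
  K `<=` L -> 0 <= c1 -> 0 <= c2 ->
  comonotone (fun z => c1 * \1_L z) (fun z => c2 * \1_K z).
Proof.
move=> KL c10 c20 x y.
have KL' z : z \in K -> z \in L by rewrite !in_setE; apply: KL.
move: (KL' x) (KL' y); rewrite !indicE.
by case: (x \in K); case: (x \in L); case: (y \in K); case: (y \in L)
  => //= h1 h2;
  (try by have := h1 erefl); (try by have := h2 erefl); nra.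
Qed.

Section CRSM.
Variables (R : realType) (E : topologicalType) (d : measure_display)
  (Omega : measurableType d) (P : probability Omega R)
  (X : Omega -> set E -> \bar R).
Hypotheses (hausE : hausdorff_space E) (X_CRSM : CRSM P X).

Let X_sup w : sup_measure (X w).
Proof. by case: X_CRSM => -[]. Qed.

Lemma measurable_fun_X A : compact A -> measurable_fun setT (X ^~ A).
Proof.
move=> cA; apply: measurable_fun_ereal_lt => x.
case: X_CRSM => -[_ mX] _ _; apply: (mX [set phi | (phi A < x%:E)%E]).
by left; exists A, x.
Qed.

Lemma measurable_X_le A x : compact A -> measurable [set w | (X w A <= x%:E)%E].
Proof.
move=> /measurable_fun_X /(_ measurableT _ (emeasurable_itv `]-oo, x%:E])).
by rewrite setTI; congr measurable; apply/seteqP; split => w; rewrite /= in_itv.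
Qed.

Lemma measurable_fineXB_le A B e : compact A -> compact B ->
  measurable [set w | fine (X w A) - fine (X w B) <= e].
Proof.
have mfX C : compact C -> measurable_fun setT (fun w => fine (X w C)).
  by move=> /measurable_fun_X; apply: measurableT_comp; exact: fine_measurable.
move=> /mfX mA /mfX mB.
have := measurable_funB mA mB measurableT (measurable_itv `]-oo, e]).
by rewrite setTI; congr measurable; apply/seteqP; split => w; rewrite /= in_itv.
Qed.

Lemma frechet_max2 A B u v : compact A -> compact B -> 0 <= u -> 0 <= v ->
  exists a, frechet P (fun w => maxe (u%:E * X w A) (v%:E * X w B))%E a.
Proof.
move=> cA cB u0 v0; case: X_CRSM => _ max_stab _.
pose K (i : 'I_2) := if val i == 0 then A else B.
pose c (i : 'I_2) := if val i == 0 then u else v.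
have [i|i|a fa] := max_stab 2 K c; rewrite /K /c; [by case: ifP|by case: ifP|].
exists a; congr frechet: fa; apply/funext => w.
rewrite !big_ord_recl big_ord0 /=.
by rewrite [X in maxe _ X]max_l // mule_ge0 ?lee_fin ?sup_measure_ge0.
Qed.

Lemma frechet_step2 (f : E -> R) K L a a' :
  compact K -> compact L -> K `<=` L -> 0 <= a' -> a' <= a ->
  (forall z, K z -> f z = a) -> (forall z, L z -> ~ K z -> f z = a') ->
  (forall z, ~ L z -> f z = 0) ->
  frechet P (fun w => maxe (a'%:E * X w L) (a%:E * X w K))%E (ell P X f).
Proof.
move=> cK cL KL a'0 a'a fK fL fLc.
have [b fb] := frechet_max2 cL cK a'0 (le_trans a'0 a'a).
suff -> : ell P X f = b by [].
apply: ell_frechet; congr frechet: fb; apply/funext => w.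
by rewrite (ext_int_step2 (X_sup w) cK cL KL a'0 a'a fK fL fLc).
Qed.

Lemma frechet_theta A : compact A -> frechet P (X ^~ A) (theta P X A).
Proof.
move=> cA; have := frechet_step2 cA cA (@subset_refl _ A) ler01 (lexx 1).
have XA : (fun w => maxe (1%:E * X w A) (1%:E * X w A))%E = X ^~ A.
  by apply/funext => w; rewrite maxxx mul1e.
rewrite XA; apply.
- by move=> z /mem_set Az; rewrite indicE Az.
- by [].
- by move=> z nAz; rewrite indicE memNset.
Qed.

Lemma theta_ge0 A : compact A -> 0 <= theta P X A.
Proof. by case/frechet_theta. Qed.

Lemma ell_scaled_indicator c A : 0 <= c -> compact A ->
  ell P X (fun z => c * \1_A z) = c * theta P X A.
Proof.
move=> c0 cA.
have := frechet_step2 (f := fun z => c * \1_A z) cA cA (@subset_refl _ A) c0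
  (lexx c).
have XA : (fun w => maxe (c%:E * X w A) (c%:E * X w A))%E =
          (fun w => c%:E * X w A)%E by apply/funext => w; rewrite maxxx.
rewrite XA => /(_ _ _ _)/frechet_unique; apply;
  last exact: frechet_scale (frechet_theta cA) c0.
- by move=> z /mem_set Az; rewrite indicE Az mulr1.
- by [].
- by move=> z nAz; rewrite indicE memNset //= mulr0.
Qed.

Definition rect K L x y : set Omega :=
  [set w | (X w L <= x%:E)%E /\ (X w K <= y%:E)%E].

Definition slice K L eps b : set Omega :=
  [set w | (fine (X w L) - fine (X w K) <= eps)%R /\ (X w K <= b%:E)%E].

Lemma measurable_rect K L x y : compact K -> compact L ->
  measurable (rect K L x y).
Proof. by move=> cK cL; apply: measurableI; exact: measurable_X_le. Qed.

Lemma measurable_slice K L eps b : compact K -> compact L ->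
  measurable (slice K L eps b).
Proof.
move=> cK cL; apply: measurableI; first exact: measurable_fineXB_le.
exact: measurable_X_le.
Qed.

Lemma joint_cdf_nested K L x y : compact K -> compact L -> K `<=` L ->
  0 < y -> y <= x ->
  P (rect K L x y) =
  (expR (- ((theta P X L - theta P X K) / x)) * expR (- (theta P X K / y)))%:E.
Proof.
move=> cK cL KL y0 yx; have x0 : 0 < x := lt_le_trans y0 yx.
pose c1 := x^-1; pose c2 := y^-1 - x^-1.
have c10 : 0 <= c1 by rewrite invr_ge0 ltW.
have c20 : 0 <= c2 by rewrite subr_ge0 lef_pV2 ?posrE.
pose f := (fun z => c1 * \1_L z) \+ (fun z => c2 * \1_K z).
have ell_f : ell P X f = c1 * theta P X L + c2 * theta P X K.
  case: X_CRSM => _ _ ell_add.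
  rewrite ell_add ?ell_scaled_indicator //; first exact: USC_scaled_indicator.
    exact: USC_scaled_indicator.
  exact: comonotone_indicators.
have := @frechet_step2 f K L (c1 + c2) c1 cK cL KL c10 (_ : c1 <= c1 + c2).
case=> [|z Kz|z Lz nKz|z nLz|_ /(_ 1 ltr01)[_]].
- by rewrite lerDl.
- by rewrite /f /= !indicE (mem_set Kz) (mem_set (KL z Kz)) !mulr1.
- by rewrite /f /= !indicE (mem_set Lz) memNset //= mulr1 mulr0 addr0.
- by rewrite /f /= !indicE !memNset //= ?mulr0 ?addr0 // => /KL.
have -> : c1 + c2 = y^-1 by rewrite addrC subrK.
set S := [set w | _]; suff -> : S = rect K L x y.
  move=> ->; rewrite ell_f divr1 -expRD /c1 /c2.
  by congr (EFin (expR _)); move: (theta P X L) (theta P X K) => tL tK; ring.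
apply/seteqP; split => w; rewrite /S /rect /= ge_max.
all: rewrite -(sup_measure_fineK (X_sup w) cL).
all: rewrite -(sup_measure_fineK (X_sup w) cK).
all: rewrite -!EFinM !lee_fin /c1 !ler_pdivrMl // !mulr1.
  by move/andP.
by move=> [-> ->].
Qed.

Lemma theta_le K L : compact K -> compact L -> K `<=` L ->
  theta P X K <= theta P X L.
Proof.
move=> cK cL KL; have [_ /(_ 1 ltr01)[_ cdfK]] := frechet_theta cK.
have : (P (rect K L 1 1) <= P [set w | (X w K <= 1%:E)%E])%E.
  apply: le_measure; rewrite ?inE; last by move=> w [].
  - exact: measurable_rect.
  - exact: measurable_X_le.
rewrite (joint_cdf_nested cK cL KL ltr01 (lexx 1)) cdfK lee_fin -expRD ler_expR.
by move: (theta P X L) (theta P X K) => tL tK; rewrite !divr1; lra.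
Qed.

(* Raising the cap on X K from y to y + eps adds the rectangle increment
   {X L <= y + eps, y < X K <= y + eps}. *)
Lemma slice_step K L eps y : compact K -> compact L -> 0 < eps -> 0 < y ->
  (P (slice K L eps y) +
     (P (rect K L (y + eps) (y + eps)) - P (rect K L (y + eps) y))
   <= P (slice K L eps (y + eps)))%E.
Proof.
move=> cK cL eps0 y0; set x := y + eps.
have yx : y <= x by rewrite lerDl ltW.
have XKfin w := sup_measure_fineK (X_sup w) cK.
have XLfin w := sup_measure_fineK (X_sup w) cL.
have Hxy : rect K L x y `<=` rect K L x x.
  by move=> w [XLx XKy]; split => //; apply: le_trans XKy _.
have mS b : measurable (slice K L eps b) := measurable_slice eps b cK cL.
have mR a b : measurable (rect K L a b) := measurable_rect a b cK cL.
have mD := measurableD (mR x x) (mR x y).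
have PU : P (slice K L eps y `|` (rect K L x x `\` rect K L x y)) =
          (P (slice K L eps y) + (P (rect K L x x) - P (rect K L x y)))%E.
  rewrite measureU ?measureD ?(setIidr Hxy) //.
    exact: le_lt_trans (probability_le1 P (mR x x)) (ltry 1).
  apply/seteqP; split => // w [[XLK XKy] [_ []]]; split => //.
  by move: XKy; rewrite /x -XLfin -XKfin !lee_fin; lra.
rewrite -PU; apply: le_measure; rewrite ?inE //; first exact: measurableU.
move=> w [[XLK XKy]|[[XLx XKx] /not_andP[//|XKy]]]; split => //.
  by apply: le_trans XKy _; rewrite lee_fin.
rewrite -XLfin lee_fin in XLx; rewrite -XKfin lee_fin in XKy.
by move/negP: XKy; rewrite -ltNge; move: XLx; rewrite /x; lra.
Qed.

Lemma increment_slice_bound K L eps n : compact K -> compact L -> K `<=` L ->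
  0 < eps ->
  ((expR (- ((theta P X L - theta P X K) / eps)) *
    expR (- (theta P X K / (n.+1%:R * eps))))%:E
   <= P (slice K L eps (n.+1%:R * eps)))%E.
Proof.
move=> cK cL KL eps0.
set D := theta P X L - theta P X K; set T := theta P X K.
have D0 : 0 <= D by rewrite subr_ge0 theta_le.
have T0 : 0 <= T := theta_ge0 cK.
have Pfin b : (fine (P (slice K L eps b)))%:E = P (slice K L eps b).
  exact/fineK/fin_num_measure/measurable_slice.
elim: n => [|n IHn].
  rewrite mul1r -(joint_cdf_nested cK cL KL eps0 (lexx eps)).
  apply: le_measure; rewrite ?inE.
  - exact: measurable_rect.
  - exact: measurable_slice.
  move=> w [XLeps XKeps]; split => //.
  have : 0 <= fine (X w K) by apply/fine_ge0/sup_measure_ge0.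
  by rewrite -(sup_measure_fineK (X_sup w) cL) lee_fin in XLeps; lra.
set y := n.+1%:R * eps in IHn *; have y0 : 0 < y by rewrite mulr_gt0.
have -> : n.+2%:R * eps = y + eps by rewrite -natr1 mulrDl mul1r.
apply: le_trans (slice_step cK cL eps0 y0); set x := y + eps.
have yx : y <= x by rewrite lerDl ltW.
have x0 : 0 < x := lt_le_trans y0 yx.
rewrite (joint_cdf_nested cK cL KL y0 yx).
rewrite (joint_cdf_nested cK cL KL x0 (lexx x)) -/D -/T.
rewrite -Pfin lee_fin in IHn; rewrite -Pfin -!EFinB -EFinD lee_fin.
have cDx : expR (- (D / eps)) <= expR (- (D / x)).
  by apply: expRN_div_le; rewrite // lerDr ltW.
have eTyx : expR (- (T / y)) <= expR (- (T / x)) by exact: expRN_div_le.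
have : 0 <= (expR (- (D / x)) - expR (- (D / eps))) *
            (expR (- (T / x)) - expR (- (T / y))).
  by rewrite mulr_ge0 // subr_ge0.
nra.
Qed.

Lemma increment_bound K L eps : compact K -> compact L -> K `<=` L -> 0 < eps ->
  ((expR (- ((theta P X L - theta P X K) / eps)))%:E
   <= P [set w | (fine (X w L) - fine (X w K) <= eps)%R])%E.
Proof.
move=> cK cL KL eps0; set c := expR _; set A := [set w | _].
have mA : measurable A := measurable_fineXB_le eps cL cK.
have [c0 c1] : 0 <= c /\ c <= 1.
  rewrite /c expR_ge0 expR_le1 oppr_le0; split => //.
  by apply: divr_ge0; rewrite ?subr_ge0 ?theta_le ?ltW.
rewrite -(fineK (fin_num_measure P _ mA)) lee_fin.
apply: (@le_of_le_addn _ _ _ (theta P X K / eps)) => [|n].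
  by rewrite divr_ge0 ?theta_ge0 ?ltW.
set t := theta P X K / eps / n.+1%:R.
have t0 : 0 <= t by rewrite !divr_ge0 ?theta_ge0 ?ltW.
have tE : t = theta P X K / (n.+1%:R * eps).
  by rewrite /t -mulrA -invfM (mulrC eps).
have slice_le : (P (slice K L eps (n.+1%:R * eps)) <= P A)%E.
  apply: le_measure; rewrite ?inE //; last by move=> w [].
  exact: measurable_slice.
have cetP : c * expR (- t) <= fine (P A).
  rewrite -lee_fin (fineK (fin_num_measure P _ mA)) tE.
  exact: le_trans (increment_slice_bound n cK cL KL eps0) slice_le.
have := ler_wpM2l c0 (expR_ge1Dx (- t)).
have := ler_wpM2r t0 c1.
lra.
Qed.

Lemma prob_XB_le_lbound K1 K2 eps : compact K1 -> compact K2 -> 0 < eps ->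
  ((expR (- (eps^-1 * (theta P X (K1 `|` K2) - theta P X K2))))%:E
   <= P [set w | (fine (X w K1) - fine (X w K2) <= eps)%R])%E.
Proof.
move=> cK1 cK2 eps0; have cL := compactU cK1 cK2.
rewrite mulrC.
apply: le_trans (increment_bound cK2 cL (@subsetUr _ K1 K2) eps0) _.
apply: le_measure; rewrite ?inE; try exact: measurable_fineXB_le.
move=> w /=; have : (X w K1 <= X w (K1 `|` K2))%E.
  exact/le_sup_measure/subsetUl.
rewrite -(sup_measure_fineK (X_sup w) cK1) -(sup_measure_fineK (X_sup w) cL).
by rewrite lee_fin; lra.
Qed.

Lemma prob_absXB_gt_ubound K1 K2 eps : compact K1 -> compact K2 -> 0 < eps ->
  (P [set w | (eps < `|fine (X w K1) - fine (X w K2)|)%R]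
   <= (eps^-1 *
       (2 * theta P X (K1 `|` K2) - theta P X K1 - theta P X K2))%:E)%E.
Proof.
move=> cK1 cK2 eps0.
set A := [set w | (fine (X w K1) - fine (X w K2) <= eps)%R].
set B := [set w | (fine (X w K2) - fine (X w K1) <= eps)%R].
have mA : measurable A := measurable_fineXB_le eps cK1 cK2.
have mB : measurable B := measurable_fineXB_le eps cK2 cK1.
have -> : [set w | (eps < `|fine (X w K1) - fine (X w K2)|)%R] = ~` A `|` ~` B.
  apply/seteqP; split => w; rewrite /A /B /= ltr_normr opprB.
    by case/orP => h; [left|right] => h'; lra.
  by case=> /negP; rewrite -ltNge => ->; rewrite ?orbT.
have hA := prob_XB_le_lbound cK1 cK2 eps0.
have hB := prob_XB_le_lbound cK2 cK1 eps0.
rewrite setUC -/B in hB; rewrite -/A in hA.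
have PAB : (P (~` A `|` ~` B) <= (1 - P A) + (1 - P B))%E.
  by rewrite -!probability_setC //; apply: measureU2; apply: measurableC.
apply: le_trans PAB _.
rewrite -(fineK (fin_num_measure P _ mA)) in hA *.
rewrite -(fineK (fin_num_measure P _ mB)) in hB *.
rewrite lee_fin in hA; rewrite lee_fin in hB; rewrite -!EFinB -EFinD lee_fin.
have := expR_ge1Dx (- (eps^-1 * (theta P X (K1 `|` K2) - theta P X K2))).
have := expR_ge1Dx (- (eps^-1 * (theta P X (K1 `|` K2) - theta P X K1))).
move: (theta P X (K1 `|` K2)) (theta P X K1) (theta P X K2) (eps^-1) hA hB
  => t12 t1 t2 ie.
have -> : ie * (2 * t12 - t1 - t2) = ie * (t12 - t2) + ie * (t12 - t1) by ring.
move: (ie * (t12 - t2)) (ie * (t12 - t1)) (fine (P A)) (fine (P B))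
  => u1 u2 pA pB.
lra.
Qed.

End CRSM.

Theorem mainTheorem16 (R : realType) (E : topologicalType)
    (d : measure_display) (Omega : measurableType d)
    (P : probability Omega R) (X : Omega -> set E -> \bar R) :
  LCHS E -> CRSM P X ->
  forall (K1 K2 : set E) (eps : R), compact K1 -> compact K2 -> 0 < eps ->
    ((expR (- (eps^-1 * (theta P X (K1 `|` K2) - theta P X K2))))%R%:E
       <= P [set w | (fine (X w K1) - fine (X w K2) <= eps)%R])%E /\
    (P [set w | (eps < `|fine (X w K1) - fine (X w K2)|)%R]
       <= (eps^-1 * (2 * theta P X (K1 `|` K2) - theta P X K1 - theta P X K2))%R%:E)%E.
Proof.
move=> [hausE _ _] X_CRSM K1 K2 eps cK1 cK2 eps0; split.
- exact: prob_XB_le_lbound.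
- exact: prob_absXB_gt_ubound.
Qed.
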